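(* Let $k,l\ge1$ and $\lambda\in\mathbb{Y}_{k,l}$ with $\lambda_l=0$. Then there exists a partition $\mathcal{P}$ of $\mathbb{Y}_{k,l}(\lambda)$ such that every block of $\mathcal{P}$ can be written as $\{\lambda^{(1)},\dots,\lambda^{(m)}\}$ with $m\ge2$ and $\lambda^{(1)}\nearrow\lambda^{(2)}\nearrow\cdots\nearrow\lambda^{(m)}$.
   Context: $\mathbb{Y}_{k,l}=\{(\lambda_1,\dots,\lambda_l)\in\mathbb{Z}^l\mid k\ge\lambda_1\ge\cdots\ge\lambda_l\ge0\}$ (Young diagrams fitting in a $k\times l$ rectangle). For $\lambda\in\mathbb{Y}_{k,l}$, $\mathbb{Y}_{k,l}(\lambda)=\{\mu\in\mathbb{Y}_{k,l}\mid \lambda_i\le\mu_i,\ i=1,\dots,l\}$. For $\lambda,\mu\in\mathbb{Y}_{k,l}$, $\lambda\nearrow\mu$ means $\mu$ is obtained from $\lambda$ by adding one box, i.e. $\mu_j=\lambda_j+1$ for exactly one index $j$ and $\mu_i=\lambda_i$ for all $i\ne j$. *)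

From mathcomp Require Import all_boot.
Set Implicit Arguments. Unset Strict Implicit. Unset Printing Implicit Defensive.

(* A candidate diagram in a k x l rectangle: a function i |-> lambda_(i+1),
   i : 'I_l, with values in {0,..,k}. *)
Definition diag (k l : nat) := {ffun 'I_l -> 'I_k.+1}.

Definition young k l (lam : diag k l) : bool :=
  [forall i : 'I_l, forall j : 'I_l, (i <= j) ==> (lam j <= lam i)].

Definition Y k l : {set diag k l} := [set lam | young lam].

Definition Yabove k l (lam : diag k l) : {set diag k l} :=
  [set mu | young mu & [forall i, lam i <= mu i]].

Definition addbox k l (lam mu : diag k l) : bool :=
  [exists j : 'I_l, (nat_of_ord (mu j) == (lam j).+1) &&
     [forall i : 'I_l, (i != j) ==> (nat_of_ord (mu i) == nat_of_ord (lam i))]].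

Definition chain_block k l (B : {set diag k l}) : Prop :=
  exists (x : diag k l) (s : seq (diag k l)),
    1 <= size s /\ path (@addbox k l) x s /\ B = [set y in x :: s].

From mathcomp Require Import all_boot zify.

(* Induction on the size of an interval [lam, rho] of Young diagrams in the
   k x l box.  If lam <> rho, let j be the first row with lam_j < rho_j.  The
   interval is the disjoint union of [lam + (box in row j), rho] (the mu with
   mu_j > lam_j) and [lam, rho'], where rho' caps the rows of rho from j on at
   lam_j (the mu with mu_j <= lam_j); adding the box keeps a Young diagram since
   lam agrees with rho above row j.  Partition both halves into chains by
   induction, each half with a chain starting at its bottom element.  If
   [lam, rho'] = {lam}, lam is prepended to the chain starting at
   lam + box.  Only the chain through the bottom can be a singleton, and it is
   not one for the interval [lam, (k, ..., k)] because lam_l = 0 < k. *)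

Set Implicit Arguments.
Unset Strict Implicit.
Unset Printing Implicit Defensive.

Lemma partitionU (T : finType) (P Q : {set {set T}}) (A B : {set T}) :
  partition P A -> partition Q B -> [disjoint A & B] ->
  partition (P :|: Q) (A :|: B).
Proof.
move=> /and3P[/eqP covP trivP nP] /and3P[/eqP covQ trivQ nQ] disAB.
apply/and3P; split.
- by rewrite /cover bigcup_setU -/(cover P) -/(cover Q) covP covQ.
- by apply: trivIsetU => //; rewrite covP covQ.
- by rewrite inE negb_or nP nQ.
Qed.

Lemma partition_setU1_block (T : finType) (P : {set {set T}}) (A C : {set T}) x :
  partition P A -> C \in P -> x \notin A ->
  partition ((x |: C) |: (P :\ C)) (x |: A).
Proof.
move=> partP CP xA; have /subsetP CA := partitionS partP CP.
have -> : x |: A = (x |: C) :|: (A :\: C).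
  apply/setP => y; rewrite !inE; case yC: (y \in C) => /=; last by rewrite orbF.
  by rewrite CA // orbT.
apply: partitionU1; first exact: partitionD1.
  by apply/set0Pn; exists x; rewrite setU11.
rewrite disjoints_subset; apply/subsetP => y; rewrite !inE.
by case/orP=> [/eqP-> | ->]; rewrite ?(negPf xA) ?andbF.
Qed.

Section YoungIntervals.

Variables k l : nat.
Notation D := (diag k l).
Implicit Types lam mu rho : D.

Lemma youngP mu :
  reflect (forall i j : 'I_l, i <= j -> mu j <= mu i) (young mu).
Proof.
apply: (iffP forallP) => [h i j | h i]; first by move/forallP/(_ j)/implyP: (h i).
by apply/forallP => j; apply/implyP/h.
Qed.

(* Only the block through the root [x] may be a singleton; keeping [x] at the
   bottom of its chain is what allows a new minimum to be prepended to it. *)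
Definition rooted_chain_partition (P : {set {set D}}) (A : {set D}) (x : D) :=
  partition P A /\
  exists s, [/\ path (@addbox k l) x s, [set y in x :: s] \in P,
                 s = [::] -> A = [set x] &
                 {in P :\ [set y in x :: s], forall B, chain_block B}].

Lemma rooted_chain_partition1 x : rooted_chain_partition [set [set x]] [set x] x.
Proof.
split.
  apply/and3P; split; [by rewrite cover1 | exact: trivIset1 |].
  by rewrite in_set1 eq_sym; apply/set0Pn; exists x; rewrite set11.
have rootE : [set y in [:: x]] = [set x] by apply/setP => y; rewrite !inE.
exists [::]; rewrite rootE setDv; split => //; first by rewrite set11.
by move=> B; rewrite inE.
Qed.

Lemma rooted_chain_partition_cons P (A : {set D}) x y :
  addbox x y -> x \notin A -> rooted_chain_partition P A y ->
  exists P', rooted_chain_partition P' (x |: A) x.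
Proof.
move=> xy xA [partP [s [path_s Cin _ chainP]]]; set C := [set z in y :: s] in Cin chainP.
have rootE : [set z in x :: y :: s] = x |: C by apply/setP => z; rewrite !inE.
exists ((x |: C) |: (P :\ C)); split; first exact: partition_setU1_block.
exists (y :: s); rewrite rootE; split => //=; first by rewrite xy.
  by rewrite setU11.
by move=> B /setD1P[BnxC /setU1P[BE | /chainP//]]; rewrite BE eqxx in BnxC.
Qed.

Lemma rooted_chain_partitionU PA PB (A B : {set D}) x y :
  rooted_chain_partition PA A y -> rooted_chain_partition PB B x ->
  A != [set y] -> B != [set x] -> [disjoint A & B] ->
  rooted_chain_partition (PA :|: PB) (A :|: B) x.
Proof.
move=> [partA [sA [pathA inA rootA chainA]]] [partB [sB [pathB inB rootB chainB]]] nA nB dis.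
split; first exact: partitionU.
exists sB; split => //; first by rewrite in_setU inB orbT.
  by move/rootB/eqP; rewrite (negPf nB).
move=> C; rewrite in_setD1 in_setU => /andP[nC /orP[CA | CB]]; last first.
  by apply: chainB; rewrite in_setD1 nC.
have [CE | nCA] := eqVneq C [set z in y :: sA]; last by apply: chainA; rewrite in_setD1 nCA.
case: sA pathA inA rootA chainA CE => [|z s] pathA _ rootA _ CE.
  by move: nA; rewrite rootA ?eqxx.
by exists y, (z :: s).
Qed.

Lemma rooted_chain_partition_chain_blocks P (A : {set D}) x :
  rooted_chain_partition P A x -> A != [set x] ->
  forall B, B \in P -> chain_block B.
Proof.
move=> [_ [s [path_s inP rootA chainP]]] nA B BP.
have [BE | nB] := eqVneq B [set y in x :: s]; last by apply: chainP; rewrite in_setD1 nB.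
case: s path_s inP rootA chainP BE => [|z s] path_s _ rootA _ ->.
  by move: nA; rewrite rootA ?eqxx.
by exists x, (z :: s).
Qed.

Definition young_interval lam rho : {set D} :=
  [set mu | young mu & [forall i : 'I_l, lam i <= mu i <= rho i]].

Lemma young_intervalP lam rho mu :
  reflect (young mu /\ forall i : 'I_l, lam i <= mu i <= rho i)
          (mu \in young_interval lam rho).
Proof. by rewrite inE; apply: (iffP andP) => -[ymu /forallP]. Qed.

Lemma young_interval_bottom lam rho :
  young lam -> (forall i : 'I_l, lam i <= rho i) -> lam \in young_interval lam rho.
Proof. by move=> ylam le; apply/young_intervalP; split=> // i; rewrite leqnn le. Qed.

Lemma young_interval_top lam rho :
  young rho -> (forall i : 'I_l, lam i <= rho i) -> rho \in young_interval lam rho.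
Proof. by move=> yrho le; apply/young_intervalP; split=> // i; rewrite leqnn le. Qed.

Lemma young_interval_id lam : young lam -> young_interval lam lam = [set lam].
Proof.
move=> ylam; apply/setP => mu; rewrite in_set1.
apply/young_intervalP/eqP => [[_ le] | ->]; last by split=> // i; rewrite leqnn.
by apply/ffunP => i; apply/val_inj/eqP; rewrite eqn_leq andbC; exact: le.
Qed.

Lemma first_gap lam rho : lam != rho -> (forall i : 'I_l, lam i <= rho i) ->
  exists2 j : 'I_l, lam j < rho j & forall i : 'I_l, i < j -> rho i <= lam i.
Proof.
move=> neq le; have [i0 lt0] : exists i, lam i < rho i.
  apply/existsP; apply: contraNT neq => /existsPn gap.
  by apply/eqP/ffunP => i; apply/val_inj/eqP; rewrite eqn_leq le leqNgt gap.
have [j ltj minj] := @arg_minnP _ i0 [pred i | lam i < rho i] val lt0.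
exists j => // i; apply: contraTT; rewrite -ltnNge -leqNgt; exact: minj.
Qed.

Definition add_box lam (j : 'I_l) : D :=
  [ffun i : 'I_l => if i == j then inord (lam j).+1 else lam i].

Definition truncate_from rho (j : 'I_l) (c : 'I_k.+1) : D :=
  [ffun i : 'I_l => if (i < j) || (rho i <= c) then rho i else c].

Lemma add_boxE lam (j i : 'I_l) : lam j < k ->
  (add_box lam j i : nat) = if i == j then (lam j).+1 else lam i.
Proof. by move=> ltk; rewrite ffunE; case: eqP => // _; rewrite inordK. Qed.

Lemma truncate_fromE rho (j i : 'I_l) c :
  (truncate_from rho j c i : nat) = if i < j then nat_of_ord (rho i) else minn (rho i) c.
Proof. by rewrite ffunE; case: ltnP => //= _; case: leqP. Qed.

Lemma addbox_add_box lam (j : 'I_l) : lam j < k -> addbox lam (add_box lam j).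
Proof.
move=> ltk; apply/existsP; exists j; rewrite add_boxE // !eqxx /=.
by apply/forallP => i; apply/implyP => /negPf ij; rewrite add_boxE // ij.
Qed.

Lemma young_truncate_from rho (j : 'I_l) c :
  young rho -> young (truncate_from rho j c).
Proof.
move/youngP => yrho; apply/youngP => a b ab; rewrite !truncate_fromE.
by have := yrho _ _ ab; case: (ltnP a j); case: (ltnP b j); lia.
Qed.

Section Split.

#[local] Set Default Proof Using "All".

Variables (lam rho : D) (j : 'I_l).
Hypotheses (ylam : young lam) (yrho : young rho) (lam_le_rho : forall i : 'I_l, lam i <= rho i).
Hypotheses (gap_j : lam j < rho j) (rho_le_lam : forall i : 'I_l, i < j -> rho i <= lam i).

Let lam' := add_box lam j.
Let rho' := truncate_from rho j (lam j).

Let lam_j_lt_k : lam j < k.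
Proof. exact: leq_trans gap_j (leq_ord _). Qed.

Lemma young_add_box : young lam'.
Proof.
move/youngP: ylam => ylam0; move/youngP: yrho => yrho0.
apply/youngP => a b ab; rewrite !add_boxE // -!val_eqE /=.
case: eqP => [bj|_]; case: eqP => [aj|naj] //; last exact: ylam0.
- have aj : a < j by lia.
  by have := yrho0 _ _ (ltnW aj); have := rho_le_lam aj; lia.
- by have := ylam0 j b; lia.
Qed.

Lemma add_box_le i : lam' i <= rho i.
Proof. by rewrite add_boxE //; case: eqP => [->|_]. Qed.

Lemma le_truncate_from i : lam i <= rho' i.
Proof.
rewrite truncate_fromE; case: ltnP => // ji.
by move/youngP: ylam => /(_ _ _ ji); rewrite leq_min lam_le_rho.
Qed.

Lemma mem_young_interval_split mu :
  mu \in young_interval lam rho =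
  (mu \in young_interval lam' rho) || (mu \in young_interval lam rho').
Proof.
apply/young_intervalP/orP.
  move=> [ymu le]; case: (ltnP (lam j) (mu j)) => [lt_j | ge_j]; [left | right].
    apply/young_intervalP; split => // i; rewrite add_boxE //.
    by case: eqP => [->|_]; move: (le i) (le j); lia.
  apply/young_intervalP; split => // i; rewrite truncate_fromE.
  case: ltnP => ji; first exact: le.
  by move/youngP: ymu => /(_ _ _ ji); move: (le i); lia.
move=> [] /young_intervalP[ymu le]; split => // i; move: (le i).
  by rewrite add_boxE //; case: eqP => [->|_]; lia.
by move: (lam_le_rho i); rewrite /rho' truncate_fromE; case: ltnP => _; lia.
Qed.

Lemma young_interval_split :
  young_interval lam rho = young_interval lam' rho :|: young_interval lam rho'.
Proof. by apply/setP => mu; rewrite in_setU mem_young_interval_split. Qed.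

Lemma young_interval_split_disjoint :
  [disjoint young_interval lam' rho & young_interval lam rho'].
Proof.
rewrite -setI_eq0; apply/eqP/setP => mu; rewrite in_setI in_set0.
apply/negP => /andP[/young_intervalP[_ le1] /young_intervalP[_ le2]].
by move: (le1 j) (le2 j); rewrite add_boxE // /rho' truncate_fromE eqxx ltnn; lia.
Qed.

Lemma truncate_from_add_box : lam' = rho -> rho' = lam.
Proof.
move=> lam'E; apply/ffunP => i; apply/val_inj => /=.
rewrite truncate_fromE -lam'E add_boxE // -val_eqE /=.
case: ltngtP => [// | ji | /val_inj ->]; last by rewrite minnC; apply/minn_idPl.
by apply/minn_idPl; move/youngP: ylam; apply; apply: ltnW.
Qed.

End Split.

Lemma young_interval_neq_set1 lam rho :
  young rho -> (forall i : 'I_l, lam i <= rho i) -> rho != lam ->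
  young_interval lam rho != [set lam].
Proof.
move=> yrho le; apply: contraNneq => intervalE.
by have := young_interval_top yrho le; rewrite intervalE in_set1.
Qed.

Lemma young_interval_rooted_chain_partition lam rho :
  young lam -> young rho -> (forall i : 'I_l, lam i <= rho i) ->
  exists P, rooted_chain_partition P (young_interval lam rho) lam.
Proof.
move En: #|young_interval lam rho| => n.
elim/ltn_ind: n lam rho En => n IH lam rho En ylam yrho le.
have [<- | neq] := eqVneq lam rho.
  by exists [set [set lam]]; rewrite young_interval_id //; apply: rooted_chain_partition1.
have [j gap_j before_j] := first_gap neq le.
have splitE := young_interval_split ylam yrho le gap_j before_j.
have dis := young_interval_split_disjoint ylam yrho le gap_j before_j.
set lam' := add_box lam j in splitE dis; set rho' := truncate_from rho j (lam j) in splitE dis.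
have ylam' : young lam' := young_add_box ylam yrho le gap_j before_j.
have yrho' : young rho' := young_truncate_from j (lam j) yrho.
have lam'_le_rho := add_box_le ylam yrho le gap_j before_j.
have lam_le_rho' := le_truncate_from ylam yrho le gap_j before_j.
have lam_in := young_interval_bottom ylam lam_le_rho'.
have lam'_in := young_interval_bottom ylam' lam'_le_rho.
have lam_notin : lam \notin young_interval lam' rho by rewrite (disjointFl dis lam_in).
have [PA rootedA] : exists PA, rooted_chain_partition PA (young_interval lam' rho) lam'.
  apply: IH (erefl _) ylam' yrho lam'_le_rho; rewrite -En splitE.
  by apply/proper_card/properUl/subsetPn; exists lam.
have [rho'E | neq'] := eqVneq rho' lam.
  move: splitE; rewrite rho'E young_interval_id // setUC => ->.
  have lam_j_lt_k : lam j < k := leq_trans gap_j (leq_ord _).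
  exact: rooted_chain_partition_cons (addbox_add_box lam_j_lt_k) lam_notin rootedA.
have [PB rootedB] : exists PB, rooted_chain_partition PB (young_interval lam rho') lam.
  apply: IH (erefl _) ylam yrho' lam_le_rho'; rewrite -En splitE.
  apply/proper_card/properUr/subsetPn; exists lam' => //.
  by rewrite (disjointFr dis lam'_in).
exists (PA :|: PB); rewrite splitE; apply: rooted_chain_partitionU rootedA rootedB _ _ dis.
- apply: young_interval_neq_set1 => //; apply: contraNneq neq' => rhoE.
  by apply/eqP; move: (truncate_from_add_box ylam yrho le gap_j before_j); apply.
- exact: young_interval_neq_set1 yrho' lam_le_rho' neq'.
Qed.

End YoungIntervals.

Theorem lemmaA2 (k l : nat) (hk : 1 <= k) (hl : 1 <= l)
  (lam : diag k l) (hlam : lam \in Y k l)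
  (hlast : forall i : 'I_l, i.+1 = l -> nat_of_ord (lam i) = 0) :
  exists P : {set {set diag k l}},
    partition P (Yabove lam) /\ (forall B, B \in P -> chain_block B).
Proof.
move: hlam; rewrite inE => ylam.
pose top : diag k l := [ffun => ord_max].
have ytop : young top by apply/youngP => i j _; rewrite !ffunE.
have le_top i : lam i <= top i by rewrite ffunE leq_ord.
have YE : Yabove lam = young_interval lam top.
  apply/setP => mu; rewrite !inE; congr (_ && _).
  by apply/eq_forallb => i; rewrite ffunE leq_ord andbT.
have [P rootedP] := young_interval_rooted_chain_partition ylam ytop le_top.
exists P; split; first by rewrite YE; case: rootedP.
apply: rooted_chain_partition_chain_blocks rootedP _.
apply: young_interval_neq_set1 => //; apply/eqP => topE.
have last_lt : l.-1 < l by rewrite prednK.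
by have := hlast (Ordinal last_lt) (prednK hl); rewrite -topE ffunE /=; lia.
Qed.
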